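(* Let $m\ge1$, $M=2^m$, $N\ge1$, and let bit probabilities $P_{C_0}(0),\ldots,P_{C_{m-1}}(0)\in(0,1)$ be given, with $P_{C_k}(1)=1-P_{C_k}(0)$. Let $\mathbb{X}$ be a matrix with rows $\boldsymbol{x}_0,\ldots,\boldsymbol{x}_{M-1}\in\mathbb{R}^N$ and let $\mathring{\mathbb{X}}$ be its transform, with rows $\mathring{\boldsymbol{x}}_i=\sum_{j=0}^{M-1}\boldsymbol{x}_j\gamma_{i,j}\sqrt{P_j}$. Then for every $j=0,\ldots,M-1$, $$\boldsymbol{x}_j=\frac{1}{M\sqrt{P_j}}\sum_{i=0}^{M-1}\mathring{\boldsymbol{x}}_i\gamma_{i,j}.$$
   Context: For an integer $0\le i\le M-1$, $n_{i,k}\in\{0,1\}$ denotes the $k$-th bit of its base-2 representation ($i=\sum_k n_{i,k}2^k$); $\bar b=1-b$ for a bit $b$. The symbol probabilities are $P_i=\prod_{k=0}^{m-1}P_{C_k}(n_{i,k})$. The coefficients are $$\gamma_{i,j}=\prod_{k=0}^{m-1}\Big[(-1)^{\bar n_{i,k}n_{j,k}}\sqrt{P_{C_k}(0)}+(-1)^{n_{i,k}\bar n_{j,k}}\sqrt{P_{C_k}(1)}\Big].$$ *)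

From HB Require Import structures.
From mathcomp Require Import all_boot all_order all_algebra.
Set Implicit Arguments. Unset Strict Implicit. Unset Printing Implicit Defensive.
Import Order.TTheory GRing.Theory Num.Theory.
Local Open Scope ring_scope.

Definition bit (i k : nat) : bool := odd (i %/ 2 ^ k).

Section Defs.
Variables (R : rcfType) (m : nat) (p0 : 'I_m -> R).

Definition PC (k : 'I_m) (b : bool) : R := if b then 1 - p0 k else p0 k.

Definition Psym (i : nat) : R := \prod_(k < m) PC k (bit i k).

Definition gamma (i j : nat) : R :=
  \prod_(k < m)
    ((-1) ^+ (~~ bit i k && bit j k) * Num.sqrt (PC k false)
     + (-1) ^+ (bit i k && ~~ bit j k) * Num.sqrt (PC k true)).

Definition transform (N : nat) (X : 'M[R]_(2 ^ m, N)) : 'M[R]_(2 ^ m, N) :=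
  \matrix_(i < 2 ^ m, l < N) \sum_(j < 2 ^ m) X j l * gamma i j * Num.sqrt (Psym j).
End Defs.

From HB Require Import structures.
From mathcomp Require Import all_boot all_order all_algebra.
From mathcomp Require Import ring.
Import Order.TTheory GRing.Theory Num.Theory.
Local Open Scope ring_scope.

(* Write s0 = sqrt P_{C_k}(0) and s1 = sqrt P_{C_k}(1).  The matrix gamma is the
   Kronecker product over k of the 2x2 matrices [[s0 + s1, s1 - s0], [s0 - s1, s0 + s1]],
   whose columns are orthogonal with squared norm 2 (s0^2 + s1^2) = 2.  Hence
   gamma^T gamma = 2^m I, so applying gamma^T to the transformed rows returns
   2^m sqrt(P_j) x_j. *)

Lemma bit_inj (m i i' : nat) : (i < 2 ^ m)%N -> (i' < 2 ^ m)%N ->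
  (forall k, (k < m)%N -> bit i k = bit i' k) -> i = i'.
Proof.
elim: m i i' => [|m IH] i i'.
  by rewrite expn0 !ltnS !leqn0 => /eqP-> /eqP->.
move=> hi hi' hb.
have bit0E : odd i = odd i'.
  by have := hb 0%N (ltn0Sn _); rewrite /bit !expn0 !divn1.
have halfE : i./2 = i'./2.
  apply: IH.
  - by rewrite -divn2 ltn_divLR // -expnSr.
  - by rewrite -divn2 ltn_divLR // -expnSr.
  move=> k hk; have := hb k.+1 hk.
  by rewrite /bit -!divn2 -!divnMA expnS mulnC.
by rewrite -[i]odd_double_half -[i']odd_double_half bit0E halfE.
Qed.

Section GammaOrthogonality.
Variables (R : rcfType) (m : nat) (p0 : 'I_m -> R).
Hypothesis p0_in01 : forall k : 'I_m, 0 < p0 k < 1.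

Definition gamma_factor (k : 'I_m) (a b : bool) : R :=
  (-1) ^+ (~~ a && b) * Num.sqrt (PC p0 k false)
     + (-1) ^+ (a && ~~ b) * Num.sqrt (PC p0 k true).

Lemma gammaE (i j : nat) :
  gamma p0 i j = \prod_(k < m) gamma_factor k (bit i k) (bit j k).
Proof. by []. Qed.

Lemma gamma_factor_orthogonal (k : 'I_m) (b b' : bool) :
  \sum_(a : bool) gamma_factor k a b * gamma_factor k a b' = 2 * (b == b')%:R.
Proof.
have /andP[p0_gt0 p0_lt1] := p0_in01 k.
have sq0 : Num.sqrt (p0 k) ^+ 2 = p0 k by rewrite sqr_sqrtr // ltW.
have sq1 : Num.sqrt (1 - p0 k) ^+ 2 = 1 - p0 k.
  by rewrite sqr_sqrtr // subr_ge0 ltW.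
have two_sq : 2 = 2 * (Num.sqrt (p0 k) ^+ 2 + Num.sqrt (1 - p0 k) ^+ 2) :> R.
  by rewrite sq0 sq1 subrKC mulr1.
rewrite big_bool /gamma_factor /PC /=.
by case: b; case: b' => /=; rewrite ?expr0 ?expr1 ?mulr1 ?mulr0 //=;
  rewrite ?[RHS]two_sq; ring.
Qed.

Definition bits_of (i : 'I_(2 ^ m)) : {ffun 'I_m -> bool} :=
  [ffun k : 'I_m => bit i k].

Lemma bits_of_inj : injective bits_of.
Proof.
move=> i i' /ffunP eq_bits; apply/val_inj/(@bit_inj m); rewrite ?ltn_ord //.
by move=> k hk; have := eq_bits (Ordinal hk); rewrite !ffunE.
Qed.

Lemma bits_of_bij : bijective bits_of.
Proof.
by apply: inj_card_bij bits_of_inj _; rewrite card_ffun card_bool !card_ord.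
Qed.

Lemma gamma_orthogonal (j j' : 'I_(2 ^ m)) :
  \sum_(i < 2 ^ m) gamma p0 i j * gamma p0 i j' = (2 ^ m)%:R * (j == j')%:R.
Proof.
pose F k a := gamma_factor k a (bit j k) * gamma_factor k a (bit j' k).
transitivity (\sum_(f : {ffun 'I_m -> bool}) \prod_(k < m) F k (f k)).
  rewrite (reindex bits_of) /=; last exact: onW_bij bits_of_bij.
  apply: eq_bigr => i _; rewrite !gammaE -big_split /=.
  by apply: eq_bigr => k _; rewrite ffunE.
rewrite -bigA_distr_bigA /F /=.
under eq_bigr => k _ do rewrite gamma_factor_orthogonal.
have [<-|neq_jj'] := eqVneq j j'.
  under eq_bigr => k _ do rewrite eqxx mulr1.
  by rewrite prodr_const card_ord natrX mulr1.
have [k neq_bit] : exists k : 'I_m, bit j k != bit j' k.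
  apply/existsP; apply: contraNT neq_jj'; rewrite negb_exists => /forallP same.
  apply/eqP/val_inj/(@bit_inj m); rewrite ?ltn_ord // => k hk.
  by have := same (Ordinal hk); rewrite negbK => /eqP.
by rewrite (bigD1 k) //= (negbTE neq_bit) mulr0 mul0r mulr0.
Qed.

Lemma Psym_gt0 (j : nat) : 0 < Psym p0 j.
Proof.
apply: prodr_gt0 => k _; have /andP[p0_gt0 p0_lt1] := p0_in01 k.
by rewrite /PC; case: bit; rewrite ?subr_gt0.
Qed.

Lemma gammaT_transform (N : nat) (X : 'M[R]_(2 ^ m, N)) (j : 'I_(2 ^ m)) :
  \sum_(i < 2 ^ m) gamma p0 i j *: row i (transform p0 X) =
    ((2 ^ m)%:R * Num.sqrt (Psym p0 j)) *: row j X.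
Proof.
apply/rowP => l; rewrite !mxE summxE.
under eq_bigr => i _ do rewrite !mxE big_distrr /=.
have coefE (j' : 'I_(2 ^ m)) :
    \sum_(i < 2 ^ m) gamma p0 i j * (X j' l * gamma p0 i j' * Num.sqrt (Psym p0 j'))
    = X j' l * Num.sqrt (Psym p0 j') * ((2 ^ m)%:R * (j == j')%:R).
  by rewrite -gamma_orthogonal big_distrr; apply: eq_bigr => i _ /=; ring.
rewrite exchange_big /= (eq_bigr _ (fun j' _ => coefE j')) (bigD1 j) //=.
rewrite big1 ?eqxx ?mulr1 ?addr0 => [|j' neq_j'j]; first ring.
by rewrite eq_sym (negbTE neq_j'j) !mulr0.
Qed.

End GammaOrthogonality.

Theorem theorem1 (R : rcfType) (m N : nat) (p0 : 'I_m -> R)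
    (hm : (1 <= m)%N) (hN : (1 <= N)%N)
    (hp : forall k : 'I_m, 0 < p0 k < 1)
    (X : 'M[R]_(2 ^ m, N)) (j : 'I_(2 ^ m)) :
  row j X =
    ((2 ^ m)%:R * Num.sqrt (Psym p0 j))^-1 *:
      \sum_(i < 2 ^ m) gamma p0 i j *: row i (transform p0 X).
Proof.
have sqrtP_neq0 : Num.sqrt (Psym p0 j) != 0.
  by rewrite sqrtr_eq0 -ltNge Psym_gt0.
have pow2_neq0 : (2 ^ m)%:R != 0 :> R by rewrite pnatr_eq0 expn_eq0.
by rewrite gammaT_transform // scalerA mulVf ?scale1r // mulf_neq0.
Qed.
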